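(* Let $G=(V,E)$ be a non-bipartite graph with $n=|V|\ge 5$ vertices, and let $K,K'$ be $k$-cliques of $G$ where $n-k-1=\binom{k}{2}$. Let $H$ be the bipartite graph with vertex set $V\cup E$ (bipartition $\{V,E\}$) and edge set $\{\{v,e\} : v\in V,\ e\in E,\ v\notin e\}$. Let $p=n-k-1$. Let $S$ be obtained from $(V\setminus K)\cup E(K)$ by removing an arbitrary vertex of $V\setminus K$, and let $S'$ be obtained from $(V\setminus K')\cup E(K')$ by removing an arbitrary vertex of $V\setminus K'$ (so $S,S'$ are $(p,p)$-bicliques of $H$). If there is a TJ-sequence of $(p,p)$-bicliques from $S$ to $S'$ in $H$, then there is a TJ-sequence of $k$-cliques from $K$ to $K'$ in $G$.
   Context: For $U\subseteq V$, $E(U)$ denotes the set of edges of $G$ with both endpoints in $U$. A $k$-clique is a set of $k$ pairwise adjacent vertices. A TJ-sequence of $k$-cliques is a sequence $K_0,\dots,K_\ell$ of $k$-cliques with $|K_i\setminus K_{i+1}|=|K_{i+1}\setminus K_i|=1$ for all $i$. A vertex set $S$ is a $(p,q)$-biclique of $H$ if $H[S]$ is isomorphic to $K_{p,q}$; a TJ-sequence of $(p,p)$-bicliques is a sequence $S_0,\dots,S_\ell$ of $(p,p)$-bicliques with $|S_i\setminus S_{i+1}|=|S_{i+1}\setminus S_i|=1$ for all $i$. *)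

From mathcomp Require Import all_boot.
Set Implicit Arguments. Unset Strict Implicit. Unset Printing Implicit Defensive.

Section Defs.
Variable V : finType.
Variable g : rel V.

Definition is_edge (e : {set V}) : bool :=
  [exists u, exists v, g u v && (e == [set u; v])].

Definition edges_in (U : {set V}) : {set {set V}} :=
  [set e | is_edge e & e \subset U].

Definition is_clique (k : nat) (K : {set V}) : Prop :=
  #|K| = k /\ (forall u v, u \in K -> v \in K -> u != v -> g u v).

Definition bipartite : Prop :=
  exists c : V -> bool, forall u v, g u v -> c u != c v.

(* the bipartite graph H on V ∪ E : vertices are inl v (v in V) and
   inr e (e an edge of G); v ~ e iff v is not in e *)
Definition HT := (V + {set V})%type.

Definition Hvert (x : HT) : bool :=
  match x with inl _ => true | inr e => is_edge e end.

Definition Hadj (x y : HT) : bool :=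
  match x, y with
  | inl v, inr e => is_edge e && (v \notin e)
  | inr e, inl v => is_edge e && (v \notin e)
  | _, _ => false
  end.
End Defs.

Section Generic.
Variable T : finType.
Variable adj : rel T.

Definition biclique (vert : pred T) (p q : nat) (S : {set T}) : Prop :=
  {subset S <= vert} /\
  exists A B : {set T},
    S = A :|: B /\ [disjoint A & B] /\ #|A| = p /\ #|B| = q /\
    (forall a b, a \in A -> b \in B -> adj a b /\ adj b a) /\
    (forall a a', a \in A -> a' \in A -> ~~ adj a a') /\
    (forall b b', b \in B -> b' \in B -> ~~ adj b b').

Definition tj_step (X Y : {set T}) : bool :=
  (#|X :\: Y| == 1) && (#|Y :\: X| == 1).

Definition TJ_seq (P : {set T} -> Prop) (X Y : {set T}) : Prop :=
  exists s : seq {set T},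
    [/\ path tj_step X s, last X s = Y & forall Z, Z \in X :: s -> P Z].
End Generic.

From mathcomp Require Import all_boot zify.

(* Since H has no edges inside V or inside E, a (p,p)-biclique Z of H, p > 0,
   consists of p vertices and p edges of G, no vertex lying on any of the edges.
   Hence the edges of Z lie inside the set F(Z) of the n - p = k + 1 vertices
   missing from Z.  Walk along the TJ-sequence keeping a k-clique inside F(Z).
   A jump either keeps the vertex part of Z, hence F(Z), or trades a vertex for
   a new vertex w while keeping the edge part; then the p = C(k,2) edges avoid w,
   so they are all the pairs of F(Z) minus w, a k-clique that also lies in the
   new F.  Two k-cliques inside one (k+1)-set are at most one token jump apart. *)

Set Implicit Arguments. Unset Strict Implicit. Unset Printing Implicit Defensive.

Section TokenJumping.
Variables (T : finType) (P : {set T} -> Prop).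

Lemma TJ_seq_refl X : P X -> TJ_seq P X X.
Proof. by move=> PX; exists [::]; split => // Z; rewrite inE => /eqP->. Qed.

Lemma TJ_seq_step X Y : tj_step X Y -> P X -> P Y -> TJ_seq P X Y.
Proof.
by move=> XY PX PY; exists [:: Y]; split; rewrite /= ?XY // => Z; rewrite !inE => /orP[]/eqP->.
Qed.

Lemma TJ_seq_trans X Y Z : TJ_seq P X Y -> TJ_seq P Y Z -> TJ_seq P X Z.
Proof.
case=> s [Xs sY Ps] [t [Yt tZ Pt]]; exists (s ++ t); split.
- by rewrite cat_path Xs sY Yt.
- by rewrite last_cat sY.
- move=> W; rewrite -cat_cons mem_cat => /orP[/Ps // | Wt].
  by apply: Pt; rewrite inE Wt orbT.
Qed.

Lemma tj_step_in_succ_set k (W X Y : {set T}) :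
  #|W| = k.+1 -> X \subset W -> Y \subset W -> #|X| = k -> #|Y| = k -> X != Y ->
  tj_step X Y.
Proof.
move=> cW XW YW cX cY neqXY.
have cXY : #|X :|: Y| <= k.+1 by rewrite -cW subset_leq_card // subUset XW.
have cXIY : #|X :&: Y| < k.
  rewrite -cX proper_card // properEneq subsetIl andbT.
  by apply: contra neqXY => /eqP/setIidPl XY; rewrite eqEcard XY cX cY leqnn.
have := cardsUI X Y; rewrite /tj_step !cardsD [Y :&: X]setIC; lia.
Qed.

Lemma TJ_seq_in_succ_set k (W X Y : {set T}) :
  #|W| = k.+1 -> X \subset W -> Y \subset W -> #|X| = k -> #|Y| = k ->
  P X -> P Y -> TJ_seq P X Y.
Proof.
move=> cW XW YW cX cY PX PY; have [<-|neqXY] := eqVneq X Y; first exact: TJ_seq_refl.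
exact/TJ_seq_step/PY/PX/(tj_step_in_succ_set cW).
Qed.

End TokenJumping.

Lemma card_preimset_codom (aT rT : finType) (f : aT -> rT) (A : {set rT}) :
  injective f -> {subset A <= codom f} -> #|f @^-1: A| = #|A|.
Proof.
move=> injf Af; rewrite -(card_imset _ injf); apply: eq_card => y.
apply/imsetP/idP => [[x] | Ay]; first by rewrite inE => Afx ->.
by have /codomP[x Ey] := Af _ Ay; exists x; rewrite // inE -Ey.
Qed.

Definition is_inl {T1 T2 : Type} (x : T1 + T2) : bool := if x is inl _ then true else false.

Section SumSets.
Variables T1 T2 : finType.

Lemma card_preimset_inl (A : {set T1 + T2}) :
  {subset A <= is_inl} -> #|inl @^-1: A| = #|A|.
Proof.
move=> Al; apply: card_preimset_codom => [|[v _|e /Al //]].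
  exact: inl_inj.
exact: codom_f.
Qed.

Lemma card_preimset_inr (A : {set T1 + T2}) :
  {subset A <= predC is_inl} -> #|inr @^-1: A| = #|A|.
Proof.
move=> Ar; apply: card_preimset_codom => [|[v /Ar //|e _]].
  exact: inr_inj.
exact: codom_f.
Qed.

End SumSets.

Section VertexEdgeBicliques.
Variables (V : finType) (g : rel V).

Definition vpart (Z : {set HT V}) : {set V} := inl @^-1: Z.
Definition epart (Z : {set HT V}) : {set {set V}} := inr @^-1: Z.

Definition VE_biclique p (Z : {set HT V}) : Prop :=
  [/\ #|vpart Z| = p, #|epart Z| = p, {subset epart Z <= is_edge g} &
      forall v e, v \in vpart Z -> e \in epart Z -> v \notin e].

Lemma Hadj_is_inl x y : Hadj g x y -> is_inl y = ~~ is_inl x.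
Proof. by case: x; case: y. Qed.

Lemma VE_biclique_parts p (A B : {set HT V}) :
  {subset A <= is_inl} -> {subset B <= predC is_inl} ->
  {subset A :|: B <= Hvert g} -> #|A| = p -> #|B| = p ->
  (forall a b, a \in A -> b \in B -> Hadj g a b) -> VE_biclique p (A :|: B).
Proof.
move=> Al Br ABH cA cB AB.
have inlB v : inl v \in B = false by apply/negbTE/negP => /Br.
have inrA e : inr e \in A = false by apply/negbTE/negP => /Al.
split.
- by rewrite -cA -(card_preimset_inl Al); apply: eq_card => v; rewrite !inE inlB orbF.
- by rewrite -cB -(card_preimset_inr Br); apply: eq_card => e; rewrite !inE inrA.
- by move=> e; rewrite inE => /ABH.
- move=> v e; rewrite !inE inlB inrA orbF => vA eB.
  by case/andP: (AB _ _ vA eB).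
Qed.

Lemma biclique_VE p (Z : {set HT V}) :
  0 < p -> biclique (Hadj g) (Hvert g) p p Z -> VE_biclique p Z.
Proof.
move=> p_gt0 [ZH [A [B [ZAB [_ [cA [cB [AB _]]]]]]]]; subst Z.
have [a0 Aa0] : exists a0, a0 \in A by apply/set0Pn; rewrite -card_gt0 cA.
have [b0 Bb0] : exists b0, b0 \in B by apply/set0Pn; rewrite -card_gt0 cB.
wlog a0l : A B a0 b0 cA cB AB ZH Aa0 Bb0 / is_inl a0.
  move=> VE_l; case: (boolP (is_inl a0)); first exact: (VE_l A B a0 b0).
  rewrite setUC -(Hadj_is_inl (AB _ _ Aa0 Bb0).1) => b0l.
  by apply: (VE_l B A b0 a0) => // [b a Bb Aa | x]; [case: (AB a b) | rewrite setUC; apply: ZH].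
apply: VE_biclique_parts => // [a Aa | b Bb | a b Aa Bb]; last by case: (AB a b).
  have := Hadj_is_inl (AB _ _ Aa Bb0).1.
  by rewrite (Hadj_is_inl (AB _ _ Aa0 Bb0).1) a0l => /esym/negbFE.
by rewrite inE /= (Hadj_is_inl (AB _ _ Aa0 Bb).1) a0l.
Qed.

Lemma vpart_imsetU (X : {set V}) (F : {set {set V}}) :
  vpart (inl @: X :|: inr @: F) = X.
Proof.
apply/setP => v; rewrite !inE (mem_imset _ _ inl_inj).
by case: imsetP => [[e] //|]; rewrite orbF.
Qed.

Lemma tj_step_vpart_add (Z Z1 : {set HT V}) w :
  tj_step Z Z1 -> w \in vpart Z1 -> w \notin vpart Z ->
  epart Z1 \subset epart Z /\ vpart Z1 \subset w |: vpart Z.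
Proof.
case/andP => _ /cards1P[y Ey]; rewrite !inE => wZ1 wZ.
have Ew : y = inl w by apply/esym/set1P; rewrite -Ey inE wZ wZ1.
subst y; have inZ x : x \in Z1 -> x != inl w -> x \in Z.
  by move=> Z1x; apply: contraR => nZx; rewrite -in_set1 -Ey inE nZx Z1x.
split; apply/subsetP.
  by move=> e; rewrite !inE => Z1e; apply: inZ.
move=> v; rewrite !inE => Z1v; have [//|neq_vw] := eqVneq v w.
by rewrite inZ // (inj_eq inl_inj).
Qed.

End VertexEdgeBicliques.

Section Cliques.
Variables (V : finType) (g : rel V).
Hypotheses (gsym : symmetric g) (girr : irreflexive g).

Lemma is_edge_card e : is_edge g e -> #|e| = 2.
Proof.
case/existsP => u /existsP[v /andP[guv /eqP->]]; rewrite cards2.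
by case: eqVneq guv => [->|]; rewrite ?girr.
Qed.

Lemma is_edge_pair u v : u != v -> is_edge g [set u; v] -> g u v.
Proof.
move=> + /existsP[a /existsP[b /andP[gab /eqP uv_ab]]].
have : u \in [set a; b] by rewrite -uv_ab !inE eqxx.
have : v \in [set a; b] by rewrite -uv_ab !inE eqxx orbT.
rewrite !inE => /orP[]/eqP-> /orP[]/eqP->; rewrite ?eqxx // => _.
by rewrite // gsym.
Qed.

Lemma clique_of_card_edges (U : {set V}) :
  'C(#|U|, 2) <= #|edges_in g U| -> is_clique g #|U| U.
Proof.
move=> cE; split=> // u v Uu Uv neq_uv; apply: is_edge_pair => //.
have edgesE : edges_in g U = [set e : {set V} | e \subset U & #|e| == 2].
  apply/eqP; rewrite eqEcard cards_draws cE andbT.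
  by apply/subsetP => e; rewrite !inE => /andP[/is_edge_card -> ->].
have : [set u; v] \in edges_in g U.
  by rewrite edgesE inE subUset !sub1set Uu Uv cards2 neq_uv.
by rewrite inE => /andP[].
Qed.

End Cliques.

Section Reconfiguration.
Variables (V : finType) (g : rel V) (k : nat).
Hypotheses (gsym : symmetric g) (girr : irreflexive g).
Hypothesis card_V : #|V| = 'C(k, 2) + k + 1.

Local Notation VE := (VE_biclique g 'C(k, 2)).
Local Notation TJ_cliques := (TJ_seq (is_clique g k)).

Definition vfree (Z : {set HT V}) : {set V} := ~: vpart Z.

Lemma card_vfree Z : VE Z -> #|vfree Z| = k.+1.
Proof. by case=> cV _ _ _; have := cardsC (vpart Z); rewrite cV card_V /vfree; lia. Qed.

Lemma clique_vfreeD1 Z Z1 w :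
  VE Z -> VE Z1 -> epart Z1 = epart Z -> w \in vpart Z1 -> w \notin vpart Z ->
  is_clique g k (vfree Z :\ w).
Proof.
move=> VZ [_ _ _ disjZ1] EZ1 wZ1 wZ; have [_ cE edgeZ disjZ] := VZ.
have cU : #|vfree Z :\ w| = k.
  by have := cardsD1 w (vfree Z); rewrite card_vfree // /vfree inE wZ add1n => -[].
rewrite -{1}cU; apply: clique_of_card_edges => //; rewrite cU -cE subset_leq_card //.
apply/subsetP => e eZ; rewrite inE; apply/andP; split; first exact: edgeZ.
apply/subsetP => y ye; rewrite !inE; apply/andP; split.
  by apply: contraTneq ye => ->; apply: disjZ1; rewrite ?EZ1.
by apply: contraTN ye => yZ; apply: (disjZ y) => //; rewrite inE.
Qed.

Lemma tj_step_clique_vfree Z Z1 C :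
  VE Z -> VE Z1 -> tj_step Z Z1 -> is_clique g k C -> C \subset vfree Z ->
  exists C1, [/\ is_clique g k C1, C1 \subset vfree Z1 & TJ_cliques C C1].
Proof.
move=> VZ VZ1 ZZ1 KC CZ.
have [sV | /subsetPn[w wZ1 wZ]] := boolP (vpart Z1 \subset vpart Z).
  by exists C; split; [|apply: subset_trans CZ _; rewrite setCS | apply: TJ_seq_refl].
have [sE sV] := tj_step_vpart_add ZZ1 wZ1 wZ.
have EZ1 : epart Z1 = epart Z.
  have [[_ cE _ _] [_ cE1 _ _]] := (VZ, VZ1).
  by apply/eqP; rewrite eqEcard sE cE cE1 leqnn.
have KZw := clique_vfreeD1 VZ VZ1 EZ1 wZ1 wZ.
exists (vfree Z :\ w); split => //.
  by rewrite /vfree setDE -setCU setCS setUC.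
exact: (TJ_seq_in_succ_set (card_vfree VZ) CZ (subsetDl _ _) KC.1 KZw.1).
Qed.

Lemma TJ_cliques_along_path (s : seq {set HT V}) Z (C D : {set V}) :
  path (@tj_step _) Z s -> (forall Y, Y \in Z :: s -> VE Y) ->
  is_clique g k C -> C \subset vfree Z ->
  is_clique g k D -> D \subset vfree (last Z s) ->
  TJ_cliques C D.
Proof.
elim: s Z C => [|Z1 s IHs] Z C /=.
  move=> _ VZs KC CZ KD DZ; apply: (TJ_seq_in_succ_set _ CZ DZ KC.1 KD.1 KC KD).
  by apply/card_vfree/VZs; rewrite mem_head.
move=> /andP[ZZ1 Z1s] VZs KC CZ KD DZ.
have VZ1s Y : Y \in Z1 :: s -> VE Y by move=> YZ1s; apply: VZs; rewrite inE YZ1s orbT.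
have [C1 [KC1 C1Z1 CC1]] :=
  tj_step_clique_vfree (VZs _ (mem_head _ _)) (VZ1s _ (mem_head _ _)) ZZ1 KC CZ.
exact: TJ_seq_trans CC1 (IHs Z1 C1 Z1s VZ1s KC1 C1Z1 KD DZ).
Qed.

End Reconfiguration.

Theorem lemma4 (V : finType) (g : rel V)
  (gsym : symmetric g) (girr : irreflexive g)
  (nonbip : ~ bipartite g) (hn : 5 <= #|V|)
  (k : nat) (K K' : {set V})
  (hK : is_clique g k K) (hK' : is_clique g k K')
  (hk : #|V| = 'C(k, 2) + k + 1)
  (x x' : V) (hx : x \in ~: K) (hx' : x' \in ~: K') :
  let p := #|V| - k - 1 in
  let S : {set HT V} :=
    (inl @: (~: K :\ x)) :|: (inr @: edges_in g K) in
  let S' : {set HT V} :=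
    (inl @: (~: K' :\ x')) :|: (inr @: edges_in g K') in
  TJ_seq (biclique (Hadj g) (Hvert g) p p) S S' ->
  TJ_seq (is_clique g k) K K'.
Proof.
move=> p S S' [s [Ss sS' bicliques]].
have p_eq : p = 'C(k, 2) by rewrite /p hk; lia.
have p_gt0 : 0 < 'C(k, 2).
  by rewrite bin_gt0; case: leqP => // k_lt2; move: hn; rewrite hk bin_small //; lia.
have sub_vfree (C : {set V}) y (F : {set {set V}}) :
    C \subset vfree (inl @: (~: C :\ y) :|: inr @: F).
  by rewrite /vfree vpart_imsetU setDE setCI !setCK subsetUl.
apply: (TJ_cliques_along_path gsym girr hk Ss _ hK (sub_vfree _ _ _) hK').
  by move=> Y /bicliques; rewrite p_eq; apply: biclique_VE.
by rewrite sS' sub_vfree.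
Qed.
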